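(* Let $\mathcal{X},\mathcal{Y}$ be finite Markov chains and $C:{\bm X}\times{\bm Y}\to\mathbb{R}_+$ a cost function. Let $p\in\mathcal{P}(\mathbb{N})$ and let $(p_k)_{k\in\mathbb{N}}\subseteq\mathcal{P}(\mathbb{N})$ satisfy $\lim_{k\to\infty}d_{\mathrm{TV}}(p_k,p)=0$, where $d_{\mathrm{TV}}$ is the total variation distance. Then $\lim_{k\to\infty}d^{p_k}_{\mathrm{OTM}}(\mathcal{X},\mathcal{Y};C)=d^{p}_{\mathrm{OTM}}(\mathcal{X},\mathcal{Y};C)$.
   Context: A finite Markov chain $\mathcal{X}=({\bm X},m^{\bm X}_\bullet,\nu^{\bm X})$ consists of a finite set ${\bm X}$, a transition kernel $m^{\bm X}_\bullet:{\bm X}\to\mathcal{P}({\bm X})$ and an initial distribution $\nu^{\bm X}$. $\mathcal{C}(\alpha,\beta)$ denotes the set of couplings of $\alpha,\beta$. A Markovian coupling between $\mathcal{X}$ and $\mathcal{Y}$ is a (possibly time-inhomogeneous) Markov chain $(X_t,Y_t)_{t\in\mathbb{N}}$ on ${\bm X}\times{\bm Y}$ with $\mathrm{law}(X_0,Y_0)\in\mathcal{C}(\nu^{\bm X},\nu^{\bm Y})$ and, for all $t,x,y$, the conditional law of $(X_{t+1},Y_{t+1})$ given $(X_t,Y_t)=(x,y)$ in $\mathcal{C}(m^{\bm X}_x,m^{\bm Y}_y)$. For $q\in\mathcal{P}(\mathbb{N})$ and $T\sim q$, $d^{q}_{\mathrm{OTM}}(\mathcal{X},\mathcal{Y};C)=\inf\mathbb{E}\,C(X_T,Y_T)$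 over all Markovian couplings independent of $T$. *)

From HB Require Import structures.
From mathcomp Require Import all_boot all_order all_algebra.
From mathcomp Require Import all_classical all_reals all_analysis.
Set Implicit Arguments. Unset Strict Implicit. Unset Printing Implicit Defensive.
Import Order.TTheory GRing.Theory Num.Theory.
Local Open Scope ring_scope.
Local Open Scope classical_set_scope.

Section Defs.
Variable R : realType.

Definition is_prob (T : finType) (mu : {ffun T -> R}) : Prop :=
  (forall x, 0 <= mu x) /\ \sum_(x : T) mu x = 1.

Definition is_probN (q : nat -> R) : Prop :=
  (forall n, 0 <= q n) /\ (\sum_(0 <= n <oo) (q n)%:E = 1)%E.

Definition dTV (p q : nat -> R) : \bar R :=
  ((2^-1)%:E * \sum_(0 <= n <oo) (`|p n - q n|)%:E)%E.

Definition is_markov_chain (X : finType) (m : X -> {ffun X -> R})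
  (nu : {ffun X -> R}) : Prop :=
  (forall x, is_prob (m x)) /\ is_prob nu.

Definition is_coupling (X Y : finType) (a : {ffun X -> R}) (b : {ffun Y -> R})
  (pi : {ffun X * Y -> R}) : Prop :=
  is_prob pi /\ (forall x, \sum_(y : Y) pi (x, y) = a x)
             /\ (forall y, \sum_(x : X) pi (x, y) = b y).

(* A (possibly time-inhomogeneous) Markovian coupling, given by its initial law
   pi0 and its transition kernels K t (x,y) on X * Y. *)
Definition is_markovian_coupling (X Y : finType)
  (mX : X -> {ffun X -> R}) (nuX : {ffun X -> R})
  (mY : Y -> {ffun Y -> R}) (nuY : {ffun Y -> R})
  (pi0 : {ffun X * Y -> R}) (K : nat -> X * Y -> {ffun X * Y -> R}) : Prop :=
  is_coupling nuX nuY pi0 /\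
  (forall t x y, is_coupling (mX x) (mY y) (K t (x, y))).

Fixpoint law_at (X Y : finType) (pi0 : {ffun X * Y -> R})
  (K : nat -> X * Y -> {ffun X * Y -> R}) (t : nat) : {ffun X * Y -> R} :=
  match t with
  | 0 => pi0
  | t'.+1 => [ffun z' => \sum_(z : X * Y) law_at pi0 K t' z * K t' z z']
  end.

Definition exp_cost_at (X Y : finType) (C : X -> Y -> R)
  (pi0 : {ffun X * Y -> R}) (K : nat -> X * Y -> {ffun X * Y -> R}) (t : nat) : R :=
  \sum_(z : X * Y) law_at pi0 K t z * C z.1 z.2.

(* E C(X_T, Y_T) with T ~ q independent of the coupling *)
Definition exp_cost_T (X Y : finType) (C : X -> Y -> R) (q : nat -> R)
  (pi0 : {ffun X * Y -> R}) (K : nat -> X * Y -> {ffun X * Y -> R}) : \bar R :=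
  (\sum_(0 <= t <oo) (q t * exp_cost_at C pi0 K t)%:E)%E.

Definition dOTM (X Y : finType)
  (mX : X -> {ffun X -> R}) (nuX : {ffun X -> R})
  (mY : Y -> {ffun Y -> R}) (nuY : {ffun Y -> R})
  (C : X -> Y -> R) (q : nat -> R) : \bar R :=
  ereal_inf [set c | exists (pi0 : {ffun X * Y -> R})
                         (K : nat -> X * Y -> {ffun X * Y -> R}),
     is_markovian_coupling mX nuX mY nuY pi0 K /\ c = exp_cost_T C q pi0 K].

End Defs.

From HB Require Import structures.
From mathcomp Require Import all_boot all_order all_algebra.
From mathcomp Require Import all_classical all_reals all_analysis.
From mathcomp Require Import ring.
Set Implicit Arguments. Unset Strict Implicit. Unset Printing Implicit Defensive.
Import Order.TTheory GRing.Theory Num.Theory.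
Local Open Scope ring_scope.
Local Open Scope classical_set_scope.

(* For every Markovian coupling the expected cost at any time t lies in
   [0, M], M the total cost.  Hence the expected costs under two time laws q
   and p differ by at most M * sum_t |q t - p t| = 2 M dTV(q, p), and taking
   infima over couplings shows that q |-> d^q_OTM is 2M-Lipschitz for dTV.
   The infimum is finite since the product coupling is Markovian. *)

Section FiniteProbability.
Variables (R : realType) (T : finType).

Lemma is_prob_le1 (mu : {ffun T -> R}) x : is_prob mu -> mu x <= 1.
Proof.
move=> [mu0 mu1]; rewrite -mu1 (bigD1 x) //= lerDl.
by apply: sumr_ge0 => y _; exact: mu0.
Qed.

Lemma is_prob_expect_bound (mu : {ffun T -> R}) (f : T -> R) :
  is_prob mu -> (forall x, 0 <= f x) ->
  0 <= \sum_x mu x * f x <= \sum_x f x.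
Proof.
move=> mu_prob f0; case: (mu_prob) => mu0 _; apply/andP; split.
  by apply: sumr_ge0 => x _; rewrite mulr_ge0.
apply: ler_sum => x _; rewrite -[leRHS]mul1r ler_wpM2r //.
exact: is_prob_le1.
Qed.

End FiniteProbability.

Section Couplings.
Variables (R : realType) (X Y : finType).

Lemma prod_coupling (a : {ffun X -> R}) (b : {ffun Y -> R}) :
  is_prob a -> is_prob b -> is_coupling a b [ffun z => a z.1 * b z.2].
Proof.
move=> [a0 a1] [b0 b1]; split; [split|split].
- by move=> z; rewrite ffunE mulr_ge0.
- under eq_bigr do rewrite ffunE.
  rewrite -(pair_bigA _ (fun x y => a x * b y)) /= -a1.
  by apply: eq_bigr => x _; rewrite -mulr_sumr b1 mulr1.
- by move=> x; under eq_bigr do rewrite ffunE /=; rewrite -mulr_sumr b1 mulr1.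
- by move=> y; under eq_bigr do rewrite ffunE /=; rewrite -mulr_suml a1 mul1r.
Qed.

Lemma law_at_prob (pi0 : {ffun X * Y -> R}) K t :
  is_prob pi0 -> (forall t z, is_prob (K t z)) -> is_prob (law_at pi0 K t).
Proof.
move=> pi0_prob K_prob; elim: t => [//|t [law0 law1]] /=; split.
  move=> z'; rewrite ffunE; apply: sumr_ge0 => z _; apply: mulr_ge0 => //.
  by case: (K_prob t z) => + _; apply.
under eq_bigr do rewrite ffunE.
rewrite exchange_big /= -law1; apply: eq_bigr => z _.
by rewrite -mulr_sumr; case: (K_prob t z) => _ ->; rewrite mulr1.
Qed.

End Couplings.

Section TimeLaws.
Variable R : realType.
Local Open Scope ereal_scope.

Lemma nneseries_mul_bound (q a : nat -> R) (M : R) :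
  is_probN q -> (forall t, 0 <= a t <= M)%R ->
  0 <= \sum_(0 <= t <oo) (q t * a t)%:E <= M%:E.
Proof.
move=> [q0 q1] a_bound.
have qa0 i : 0 <= (q i * a i)%:E.
  by case/andP: (a_bound i) => a0 _; rewrite lee_fin mulr_ge0.
apply/andP; split; first exact: nneseries_ge0.
rewrite -[leRHS]mule1 -q1 -nneseriesZl; last by move=> i _; rewrite lee_fin.
apply: lee_nneseries => // n _; rewrite -EFinM lee_fin mulrC.
by case/andP: (a_bound n) => a0 aM; rewrite ler_wpM2r.
Qed.

Lemma dTVC (q p : nat -> R) : dTV q p = dTV p q.
Proof. by congr (_ * _); apply: eq_eseriesr => t _; rewrite distrC. Qed.

Lemma dTV_fin_num (q p : nat -> R) :
  is_probN q -> is_probN p -> dTV q p \is a fin_num.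
Proof.
move=> [q0 q1] [p0 p1].
have dist_le2 : \sum_(0 <= t <oo) (`|q t - p t|)%:E <= 2%:E.
  have -> : 2%:E = \sum_(0 <= t <oo) (q t)%:E + \sum_(0 <= t <oo) (p t)%:E.
    by rewrite q1 p1 -EFinD.
  rewrite -nneseriesD; last 2 first.
  - by move=> i _ _; rewrite lee_fin.
  - by move=> i _ _; rewrite lee_fin.
  apply: lee_nneseries => [i _ _|n _]; rewrite lee_fin //.
  by rewrite (le_trans (ler_normB _ _)) // !ger0_norm.
rewrite ge0_fin_numE; last by rewrite mule_ge0 // nneseries_ge0.
by rewrite (@le_lt_trans _ _ (2^-1 * 2)%:E) ?ltry // EFinM lee_pmul2l.
Qed.

Lemma nneseries_mul_le_dTV (q p a : nat -> R) (M : R) :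
  (forall t, 0 <= q t)%R -> (forall t, 0 <= p t)%R ->
  (forall t, 0 <= a t <= M)%R ->
  \sum_(0 <= t <oo) (q t * a t)%:E <=
  \sum_(0 <= t <oo) (p t * a t)%:E + (2 * M)%:E * dTV q p.
Proof.
move=> q0 p0 a_bound.
have a0 t : (0 <= a t)%R by case/andP: (a_bound t).
have aM t : (a t <= M)%R by case/andP: (a_bound t).
have M0 : (0 <= M)%R := le_trans (a0 0%N) (aM 0%N).
have -> : (2 * M)%:E * dTV q p = M%:E * \sum_(0 <= t <oo) (`|q t - p t|)%:E.
  by rewrite /dTV muleA -EFinM mulrAC divff ?mul1r.
rewrite -nneseriesZl; last by move=> i _; rewrite lee_fin.
rewrite -nneseriesD; first last.
- by move=> i _ _; rewrite lee_fin mulr_ge0.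
- by move=> i _ _; rewrite lee_fin mulr_ge0.
apply: lee_nneseries => [i _ _|n _]; first by rewrite lee_fin mulr_ge0.
have -> : (q n * a n = p n * a n + (q n - p n) * a n)%R by ring.
rewrite -EFinM -EFinD lee_fin lerD2l.
by rewrite (le_trans (ler_wpM2r (a0 n) (ler_norm _))) // mulrC ler_wpM2r.
Qed.

End TimeLaws.

Section OptimalTransportMarkov.
Variables (R : realType) (X Y : finType) (C : X -> Y -> R).
Hypothesis C0 : forall x y, 0 <= C x y.
Variables (mX : X -> {ffun X -> R}) (nuX : {ffun X -> R})
  (mY : Y -> {ffun Y -> R}) (nuY : {ffun Y -> R}).
Hypotheses (mc_X : is_markov_chain mX nuX) (mc_Y : is_markov_chain mY nuY).

Definition total_cost : R := \sum_(z : X * Y) C z.1 z.2.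

Lemma exp_cost_at_bound pi0 K :
  is_markovian_coupling mX nuX mY nuY pi0 K ->
  forall t, 0 <= exp_cost_at C pi0 K t <= total_cost.
Proof.
move=> [[pi0_prob _] K_coupling] t; apply: is_prob_expect_bound => [|z].
  by apply: law_at_prob => // t' [x y]; case: (K_coupling t' x y).
exact: C0.
Qed.

Lemma product_markovian_coupling :
  is_markovian_coupling mX nuX mY nuY [ffun z => nuX z.1 * nuY z.2]
    (fun _ z => [ffun z' => mX z.1 z'.1 * mY z.2 z'.2]).
Proof.
case: mc_X mc_Y => mX_prob nuX_prob [mY_prob nuY_prob].
by split=> [|t x y]; exact: prod_coupling.
Qed.

Local Open Scope ereal_scope.

Lemma exp_cost_T_bound q pi0 K : is_probN q ->
  is_markovian_coupling mX nuX mY nuY pi0 K ->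
  0 <= exp_cost_T C q pi0 K <= total_cost%:E.
Proof.
by move=> q_prob coupling; exact: nneseries_mul_bound (exp_cost_at_bound coupling).
Qed.

Lemma dOTM_fin_num q : is_probN q -> dOTM mX nuX mY nuY C q \is a fin_num.
Proof.
move=> q_prob; rewrite ge0_fin_numE; last first.
  apply: le_ereal_inf_tmp => c [pi0 [K [coupling ->]]].
  by case/andP: (exp_cost_T_bound q_prob coupling).
have coupling := product_markovian_coupling.
apply: (@le_lt_trans _ _ total_cost%:E); last exact: ltry.
apply: ge_ereal_inf; eexists; first by do 2 eexists; split; first exact: coupling.
by case/andP: (exp_cost_T_bound q_prob coupling).
Qed.

Lemma dOTM_le_dTV q p : is_probN q -> is_probN p ->
  dOTM mX nuX mY nuY C q <=
  dOTM mX nuX mY nuY C p + (2 * total_cost)%:E * dTV q p.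
Proof.
move=> q_prob p_prob.
have dTV_fin : (2 * total_cost)%:E * dTV q p \is a fin_num.
  by rewrite fin_numM // dTV_fin_num.
rewrite -leeBlDr //; apply: le_ereal_inf_tmp => c [pi0 [K [coupling ->]]].
rewrite leeBlDr //; apply: le_trans (_ : exp_cost_T C q pi0 K <= _).
  by apply: ereal_inf_lbound; exists pi0, K.
case: q_prob p_prob => q0 _ [p0 _].
exact: nneseries_mul_le_dTV (exp_cost_at_bound coupling).
Qed.

End OptimalTransportMarkov.

Local Open Scope ereal_scope.

Theorem lemma9 (R : realType) (X Y : finType)
  (mX : X -> {ffun X -> R}) (nuX : {ffun X -> R})
  (mY : Y -> {ffun Y -> R}) (nuY : {ffun Y -> R})
  (C : X -> Y -> R) (p : nat -> R) (pk : nat -> nat -> R) :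
  is_markov_chain mX nuX -> is_markov_chain mY nuY ->
  (forall x y, (0 <= C x y)%R) ->
  is_probN p -> (forall k, is_probN (pk k)) ->
  dTV (pk k) p @[k --> \oo] --> 0%E ->
  dOTM mX nuX mY nuY C (pk k) @[k --> \oo] --> dOTM mX nuX mY nuY C p.
Proof.
move=> mc_X mc_Y C0 p_prob pk_prob dTV_cvg.
set l := dOTM mX nuX mY nuY C p.
pose D k := (2 * total_cost C)%:E * dTV (pk k) p.
have l_fin : l \is a fin_num by exact: dOTM_fin_num.
have D_cvg : D k @[k --> \oo] --> 0.
  by rewrite -(mule0 (2 * total_cost C)%:E); exact: cvgeZl.
apply: (@squeeze_cvge _ _ _ _ (fun k => l - D k) _ (fun k => l + D k)).
- apply: nearW => k; have D_fin : D k \is a fin_num.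
    by rewrite fin_numM // dTV_fin_num.
  rewrite leeBlDr // /D; apply/andP; split; last exact: dOTM_le_dTV.
  by rewrite dTVC; exact: dOTM_le_dTV.
- rewrite -[X in _ --> X](sube0 l); apply: cvgeB => //; last exact: cvg_cst.
  exact: fin_num_adde_defr.
- rewrite -[X in _ --> X](adde0 l); apply: cvgeD => //; last exact: cvg_cst.
  exact: fin_num_adde_defr.
Qed.
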